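(* Consider the linear program $$p^*(t_0,X_0)=\sup\ \langle 1,\mu_p\rangle$$ subject to $\mu_p+\mu_c=\delta_{t_0}\otimes\mu_0+\mathcal L^\dagger\mu$, $\langle1,\mu_0\rangle=1$, $\mu_0\in\mathcal M_+(X_0)$, $\mu,\mu_c\in\mathcal M_+([t_0,T]\times X)$, $\mu_p\in\mathcal M_+([t_0,T]\times X_u)$. Its optimal value equals the optimal value of the linear program $$\sup\ \langle I_{X_u},\mu_\tau\rangle$$ subject to $\mu_\tau=\delta_{t_0}\otimes\mu_0+\mathcal L^\dagger\mu$, $\langle 1,\mu_0\rangle=1$, $\mu_0\in\mathcal M_+(X_0)$, $\mu,\mu_\tau\in\mathcal M_+([t_0,T]\times X)$.
   Context: Let $X\subseteq\mathbb R^n$, $X_0,X_u\subseteq X$, $t_0<T$. A stochastic process on $X$ is described by its generator $\mathcal L$, a linear operator on a class of test functions $\mathcal C=\mathrm{dom}(\mathcal L)$ of functions $v(t,x)$ on $[t_0,T]\times X$, mapping $\mathcal C$ into continuous functions. $\mathcal M_+(S)$ denotes nonnegative Borel measures on $S$, $\langle f,\mu\rangle=\int f\,d\mu$, $I_{X_u}$ is the indicator function of $X_u$, $\delta_{t_0}$ is the Dirac measure at $t_0$, $\otimes$ is the product of measures. A constraint $\nu=\delta_{t_0}\otimes\mu_0+\mathcal L^\dagger\mu$ means: for all $v\in\mathcal C$, $\langle v,\nu\rangle=\int v(t_0,x)\,d\mu_0(x)+\langle\mathcal Lv,\mu\rangle$. *)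

From HB Require Import structures.
From mathcomp Require Import all_boot all_order all_algebra.
From mathcomp Require Import all_classical all_reals all_analysis.
Set Implicit Arguments. Unset Strict Implicit. Unset Printing Implicit Defensive.
Import Order.TTheory GRing.Theory Num.Theory.
Import numFieldNormedType.Exports.
Local Open Scope classical_set_scope.
Local Open Scope ring_scope.
Local Open Scope ereal_scope.

Notation Rn R n := (g_sigma_algebraType (@open 'rV[R]_n)).

Notation TX R n := (R * Rn R n)%type.

Definition tbox (R : realType) (n : nat) (t0 T : R) (A : set (Rn R n))
  : set (TX R n) := `[t0, T]%classic `*` A.

(* mu is (the extension by zero of) a nonnegative measure on S, i.e. a
   measure on the ambient space giving no mass outside S. *)
Definition supported_on d (U : measurableType d) (R : realType)
  (mu : {measure set U -> \bar R}) (S : set U) : Prop :=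
  mu (~` S) = 0.

Definition pairing d (U : measurableType d) (R : realType)
  (mu : {measure set U -> \bar R}) (f : U -> R) : \bar R :=
  \int[mu]_z (f z)%:E.

Definition generator (R : realType) (n : nat) (t0 T : R) (X : set (Rn R n))
  (C : set (TX R n -> R)) (L : (TX R n -> R) -> (TX R n -> R)) : Prop :=
  [/\ C (fun _ => 0%R),
      (forall (a b : R) v w, C v -> C w -> C (fun z => a * v z + b * w z)%R),
      (forall (a b : R) v w, C v -> C w ->
         L (fun z => a * v z + b * w z)%R = (fun z => a * L v z + b * L w z)%R)
    & (forall v, C v ->
         {within (tbox t0 T X : set (R * 'rV[R]_n)),
            continuous (L v : R * 'rV[R]_n -> R)})].

(* The constraint  nu = delta_{t0} (x) mu0 + L^dagger mu : for every v in C,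
   <v, nu> = \int v(t0,x) dmu0(x) + <L v, mu>. *)
Definition adjoint_eq (R : realType) (n : nat) (t0 : R)
  (C : set (TX R n -> R)) (L : (TX R n -> R) -> (TX R n -> R))
  (nu : {measure set TX R n -> \bar R}) (mu0 : {measure set Rn R n -> \bar R})
  (mu : {measure set TX R n -> \bar R}) : Prop :=
  forall v, C v ->
    pairing nu v = \int[mu0]_x (v (t0, x))%:E + pairing mu (L v).

Definition LP1_feasible (R : realType) (n : nat) (t0 T : R)
  (X X0 Xu : set (Rn R n)) (C : set (TX R n -> R))
  (L : (TX R n -> R) -> (TX R n -> R))
  (mu0 : {measure set Rn R n -> \bar R})
  (mu mup muc : {measure set TX R n -> \bar R}) : Prop :=
  adjoint_eq t0 C L (measure_add mup muc) mu0 mu /\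
  pairing mu0 (fun _ => 1%R) = 1 /\
  supported_on mu0 X0 /\
  supported_on mu (tbox t0 T X) /\
  supported_on muc (tbox t0 T X) /\
  supported_on mup (tbox t0 T Xu).

Definition LP1_value (R : realType) (n : nat) (t0 T : R)
  (X X0 Xu : set (Rn R n)) (C : set (TX R n -> R))
  (L : (TX R n -> R) -> (TX R n -> R)) : \bar R :=
  ereal_sup [set r | exists mu0 mu mup muc,
    LP1_feasible t0 T X X0 Xu C L mu0 mu mup muc /\
    r = pairing mup (fun _ => 1%R)].

Definition LP2_feasible (R : realType) (n : nat) (t0 T : R)
  (X X0 : set (Rn R n)) (C : set (TX R n -> R))
  (L : (TX R n -> R) -> (TX R n -> R))
  (mu0 : {measure set Rn R n -> \bar R})
  (mu mut : {measure set TX R n -> \bar R}) : Prop :=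
  adjoint_eq t0 C L mut mu0 mu /\
  pairing mu0 (fun _ => 1%R) = 1 /\
  supported_on mu0 X0 /\
  supported_on mu (tbox t0 T X) /\
  supported_on mut (tbox t0 T X).

Definition LP2_value (R : realType) (n : nat) (t0 T : R)
  (X X0 Xu : set (Rn R n)) (C : set (TX R n -> R))
  (L : (TX R n -> R) -> (TX R n -> R)) : \bar R :=
  ereal_sup [set r | exists mu0 mu mut,
    LP2_feasible t0 T X X0 C L mu0 mu mut /\
    r = pairing mut (fun z : TX R n => \1_Xu z.2)].

From HB Require Import structures.
From mathcomp Require Import all_boot all_order all_algebra.
From mathcomp Require Import all_classical all_reals all_analysis.
Set Implicit Arguments. Unset Strict Implicit. Unset Printing Implicit Defensive.
Import Order.TTheory GRing.Theory.
Import numFieldNormedType.Exports.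
Local Open Scope classical_set_scope.
Local Open Scope ring_scope.
Local Open Scope ereal_scope.

(* The two programs differ only in how the mass at the final time is split.
   A feasible point of the first gives mu_tau := mu_p + mu_c for the second,
   whose mass on R x X_u dominates the total mass of mu_p, carried by
   [t0,T] x X_u.  Conversely a feasible mu_tau splits into its restrictions to
   the cylinder R x X_u (playing mu_p) and to its complement (playing mu_c);
   the adjoint constraint only sees their sum.  Neither direction uses t0 < T,
   X0 or the assumptions on the generator. *)

Lemma ereal_sup_le_dominated (R : realType) (S S' : set \bar R) :
  (forall x, S x -> exists2 y, S' y & x <= y) -> ereal_sup S <= ereal_sup S'.
Proof.
move=> dom; apply/ereal_supP => x Sx.
by apply: le_ereal_sup_tmp; exact: dom.
Qed.

Section supported_measures.
Context d (U : measurableType d) (R : realType).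
Implicit Types (mu : {measure set U -> \bar R}) (A S : set U).

Lemma pairing_cst1 mu : pairing mu (fun _ => 1%R) = mu setT.
Proof. by rewrite /pairing integral_cst // mul1e. Qed.

Lemma pairing_indic mu A : measurable A -> pairing mu \1_A = mu A.
Proof. by move=> mA; rewrite /pairing integral_indic // setIT. Qed.

Lemma eq_pairing_measure mu1 mu2 f :
  (forall A, measurable A -> mu1 A = mu2 A) -> pairing mu1 f = pairing mu2 f.
Proof. by move=> eq12; apply: eq_measure_integral => A mA _; exact: eq12. Qed.

Lemma supported_onS mu S S' : supported_on mu S ->
  measurable S -> measurable S' -> S `<=` S' -> supported_on mu S'.
Proof.
move=> muS mS mS' SS'; apply/eqP; rewrite eq_le measure_ge0 andbT -muS.
by rewrite le_measure ?inE //; [exact: measurableC .. | exact: subsetC].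
Qed.

Lemma supported_on_add mu1 mu2 S : supported_on mu1 S -> supported_on mu2 S ->
  supported_on (measure_add mu1 mu2) S.
Proof.
move=> mu1S mu2S; rewrite /supported_on.
transitivity (mu1 (~` S) + mu2 (~` S)); first exact: measure_addE.
by rewrite mu1S mu2S adde0.
Qed.

Lemma le_measure_addl mu1 mu2 A : mu1 A <= measure_add mu1 mu2 A.
Proof.
have -> : measure_add mu1 mu2 A = mu1 A + mu2 A by exact: measure_addE.
exact: leeDl.
Qed.

Lemma supported_on_mrestr mu S A (mA : measurable A) : measurable S ->
  supported_on mu S -> supported_on (mrestr mu mA) (S `&` A).
Proof.
move=> mS muS; apply/eqP; rewrite eq_le measure_ge0 andbT -muS.
change (mu (~` (S `&` A) `&` A) <= mu (~` S)).
rewrite le_measure ?inE //.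
- by apply: measurableI => //; apply: measurableC; exact: measurableI.
- exact: measurableC.
- by move=> z [SAz Az] Sz; exact: SAz.
Qed.

Lemma supported_on_massE mu S : measurable S -> supported_on mu S ->
  mu setT = mu S.
Proof.
move=> mS muS; rewrite -(setUCr S) measureU //; last 2 first.
- exact: measurableC.
- exact: setICr.
by rewrite -[RHS]addr0 -muS.
Qed.

Lemma measure_add_mrestrC mu A (mA : measurable A) B : measurable B ->
  measure_add (mrestr mu mA) (mrestr mu (measurableC mA)) B = mu B.
Proof.
move=> mB; rewrite measure_addE.
change (mu (B `&` A) + mu (B `&` ~` A) = mu B).
rewrite -measureU; last 3 first.
- exact: measurableI.
- by apply: measurableI => //; exact: measurableC.
- by rewrite setIACA setICr !setI0.
by rewrite -setIUr setUCr setIT.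
Qed.

End supported_measures.

Lemma indic_snd (U V : Type) (R : realType) (A : set V) (z : U * V) :
  \1_A z.2 = \1_([set: U] `*` A) z :> R.
Proof. by rewrite /indic in_setX in_setT. Qed.

Section LP_reformulation.
Variables (R : realType) (n : nat) (t0 T : R) (X X0 Xu : set (Rn R n)).
Variables (C : set (TX R n -> R)) (L : (TX R n -> R) -> (TX R n -> R)).
Hypotheses (mX : measurable X) (mXu : measurable Xu) (XuX : Xu `<=` X).

Let cyl : set (TX R n) := [set: R] `*` Xu.

Let mcyl : measurable cyl := measurableX measurableT mXu.

Lemma measurable_tbox (A : set (Rn R n)) :
  measurable A -> measurable (tbox t0 T A).
Proof. by move=> mA; apply: measurableX => //; exact: measurable_itv. Qed.

Let tboxXu_sub : tbox t0 T Xu `<=` tbox t0 T X.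
Proof. by move=> [t x] [? ?]; split => //; exact: XuX. Qed.

Let pairing_indic_snd (mu : {measure set TX R n -> \bar R}) :
  pairing mu (fun z : TX R n => \1_Xu z.2) = mu cyl.
Proof.
rewrite -pairing_indic //; congr pairing.
by apply: funext => z; exact: indic_snd.
Qed.

Lemma LP1_feasible_LP2 mu0 mu mup muc :
  LP1_feasible t0 T X X0 Xu C L mu0 mu mup muc ->
  LP2_feasible t0 T X X0 C L mu0 mu (measure_add mup muc).
Proof.
move=> [adj [mass1 [mu0X0 [muX [mucX mupXu]]]]].
do 4!split => //; apply: supported_on_add => //.
exact: supported_onS mupXu (measurable_tbox mXu) (measurable_tbox mX) tboxXu_sub.
Qed.

Lemma LP1_objective_le mu0 mu mup muc :
  LP1_feasible t0 T X X0 Xu C L mu0 mu mup muc ->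
  pairing mup (fun _ => 1%R) <=
    pairing (measure_add mup muc) (fun z : TX R n => \1_Xu z.2).
Proof.
move=> [_ [_ [_ [_ [_ mupXu]]]]].
have mupcyl : supported_on mup cyl.
  by apply: (supported_onS mupXu) => //; [exact: measurable_tbox | move=> z []].
rewrite pairing_cst1 pairing_indic_snd (supported_on_massE mcyl) //.
exact: le_measure_addl.
Qed.

Lemma LP2_feasible_LP1 mu0 mu mut :
  LP2_feasible t0 T X X0 C L mu0 mu mut ->
  LP1_feasible t0 T X X0 Xu C L mu0 mu (mrestr mut mcyl)
    (mrestr mut (measurableC mcyl)).
Proof.
move=> [adj [mass1 [mu0X0 [muX mutX]]]].
have mTX := measurable_tbox mX.
split.
  (* The restrictions add up to mut on measurable sets only, which is all an
     integral sees. *)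
  move=> v Cv; rewrite -adj //; apply: eq_pairing_measure => B mB.
  exact: measure_add_mrestrC.
do 4!split => //.
- apply: (supported_onS (supported_on_mrestr (measurableC mcyl) mTX mutX)).
  + by apply: measurableI => //; exact: measurableC.
  + exact: mTX.
  + exact: subIsetl.
- apply: (supported_onS (supported_on_mrestr mcyl mTX mutX)).
  + exact: measurableI.
  + exact: measurable_tbox.
  + by move=> [t x] [[? ?] [_ ?]]; split.
Qed.

Lemma LP2_objectiveE (mut : {measure set TX R n -> \bar R}) :
  pairing (mrestr mut mcyl) (fun _ => 1%R) =
    pairing mut (fun z : TX R n => \1_Xu z.2).
Proof.
rewrite pairing_cst1 pairing_indic_snd.
by transitivity (mut (setT `&` cyl)); last rewrite setTI.
Qed.

End LP_reformulation.

Theorem theorem2 (R : realType) (n : nat) (t0 T : R)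
  (X X0 Xu : set (Rn R n))
  (C : set (TX R n -> R)) (L : (TX R n -> R) -> (TX R n -> R)) :
  (t0 < T)%R ->
  measurable X -> measurable X0 -> measurable Xu ->
  X0 `<=` X -> Xu `<=` X ->
  generator t0 T X C L ->
  LP1_value t0 T X X0 Xu C L = LP2_value t0 T X X0 Xu C L.
Proof.
move=> _ mX _ mXu _ XuX _.
apply/eqP; rewrite eq_le; apply/andP; split; apply: ereal_sup_le_dominated.
- move=> _ [mu0 [mu [mup [muc [feas ->]]]]].
  exists (pairing (measure_add mup muc) (fun z : TX R n => \1_Xu z.2)).
    exists mu0, mu, (measure_add mup muc); split => //.
    exact: (LP1_feasible_LP2 mX mXu XuX feas).
  exact: (LP1_objective_le mXu feas).
- move=> _ [mu0 [mu [mut [feas ->]]]].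
  exists (pairing (mrestr mut (measurableX measurableT mXu)) (fun _ => 1%R)).
    exists mu0, mu, (mrestr mut (measurableX measurableT mXu)).
    exists (mrestr mut (measurableC (measurableX measurableT mXu))).
    split => //; exact: (LP2_feasible_LP1 mX mXu feas).
  by rewrite (LP2_objectiveE mXu).
Qed.
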